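(* Let $(\mathbf{S}^1, A^1, U^1, \mathbf{S}^2,\ldots)$ be a process as in the context satisfying (A0) and (C1)–(C3), and let $\phi:\mathcal{S}\to\mathbb{R}^q$ be measurable, with $\mathbf{S}^t_\phi=\phi(\mathbf{S}^t)$ and $\mathbf{Y}^{t+1}=(U^t,(\mathbf{S}^{t+1})^\top)^\top$. Fix $t$ and suppose at least one of the following holds: (i) $\{\mathbf{Y}^{t+1}-\mathbb{E}(\mathbf{Y}^{t+1}\mid\mathbf{S}^t_\phi,A^t)\}\perp\!\!\!\perp\mathbf{S}^t\mid A^t$; (ii) $\{\mathbf{S}^t-\mathbb{E}(\mathbf{S}^t\mid\mathbf{S}^t_\phi)\}\perp\!\!\!\perp(\mathbf{Y}^{t+1},\mathbf{S}^t_\phi)\mid A^t$. Then $\mathbf{Y}^{t+1}\perp\!\!\!\perp\mathbf{S}^t\mid\mathbf{S}^t_\phi,A^t$.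
   Context: The process: $\mathbf{S}^t\in\mathcal{S}\subseteq\mathbb{R}^p$ are states, $A^t\in\mathcal{A}=\{1,\ldots,K\}$ decisions, and $U^t=U(\mathbf{S}^t,A^t,\mathbf{S}^{t+1})$ for a fixed deterministic measurable function $U$ with $\sup_t|U^t|\le M$ a.s. (so all conditional expectations above exist; the state $\mathbf{S}^t$ is assumed integrable). (A0): $P(\mathbf{S}^{t+1}\in\mathcal{G}\mid A^t,\mathbf{S}^t,\ldots,A^1,\mathbf{S}^1)=P(\mathbf{S}^{t+1}\in\mathcal{G}\mid A^t,\mathbf{S}^t)$ for all measurable $\mathcal{G}$, with the kernel independent of $t$. (C1)–(C3) are consistency, positivity and sequential ignorability of the potential-outcome model: (C1) $\mathbf{S}^t=\mathbf{S}^{*t}(A^1,\ldots,A^{t-1})$ where $\mathbf{S}^{*t}(\overline{\mathbf{a}}^{t-1})$ are potential states; (C2) $P(A^t=a\mid \mathbf{S}^1,\ldots,\mathbf{S}^t,A^1,\ldots,A^{t-1})\ge\epsilon>0$ a.s. for all $a$; (C3) the collection of all potential states is independent of $A^t$ given $(\mathbf{S}^1,\ldots,\mathbf{S}^t,A^1,\ldots,A^{t-1})$. *)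

From mathcomp Require Import all_boot all_order all_algebra.
From mathcomp Require Import all_classical all_reals all_analysis.

Set Implicit Arguments.
Unset Strict Implicit.
Unset Printing Implicit Defensive.

Import Order.TTheory GRing.Theory Num.Theory.
Local Open Scope classical_set_scope.
Local Open Scope ring_scope.

(* Vectors of R^n are represented as n.-tuple R, equipped with the library's
   product sigma-algebra (generated by the coordinate projections). *)
Definition vsub (R : realType) (n : nat) (u v : n.-tuple R) : n.-tuple R :=
  [tuple tnth u i - tnth v i | i < n].

Section CondExp.
Context (R : realType) (d : measure_display) (Omega : measurableType d)
        (P : probability Omega R).

(* m \o Z is a version of the conditional expectation E(X | Z)
   (Doob-Dynkin form of a sigma(Z)-measurable random variable). *)
Definition is_condexp (dT : measure_display) (T : measurableType dT)
    (X : Omega -> R) (Z : Omega -> T) (m : T -> R) : Prop :=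
  [/\ measurable_fun setT m,
      P.-integrable setT (EFin \o X),
      P.-integrable setT (EFin \o (m \o Z)) &
      forall C : set T, measurable C ->
        (\int[P]_(w in Z @^-1` C) (X w)%:E =
         \int[P]_(w in Z @^-1` C) (m (Z w))%:E)%E].

Definition is_vcondexp (dT : measure_display) (T : measurableType dT) (n : nat)
    (X : Omega -> n.-tuple R) (Z : Omega -> T) (m : T -> n.-tuple R) : Prop :=
  forall i : 'I_n,
    is_condexp (fun w => tnth (X w) i) Z (fun z => tnth (m z) i).

Definition condindep (d1 d2 d3 : measure_display)
    (T1 : measurableType d1) (T2 : measurableType d2) (T3 : measurableType d3)
    (X : Omega -> T1) (Y : Omega -> T2) (Z : Omega -> T3) : Prop :=
  forall (A : set T1) (B : set T2), measurable A -> measurable B ->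
  exists mA mB : T3 -> R,
    [/\ is_condexp (\1_(X @^-1` A)) Z mA,
        is_condexp (\1_(Y @^-1` B)) Z mB &
        is_condexp (\1_(X @^-1` A `&` Y @^-1` B)) Z (fun z => mA z * mB z)].

End CondExp.

Section Process.
Context (R : realType) (d : measure_display) (Omega : measurableType d)
        (P : probability Omega R) (p : nat).

(* Time is indexed from 0: S t, A t stand for S^{t+1}, A^{t+1} of the paper. *)

Definition history (S : nat -> Omega -> p.-tuple R) (A : nat -> Omega -> nat)
    (t : nat) (w : Omega) : (t.+1).-tuple (p.-tuple R * nat) :=
  [tuple (S i w, A i w) | i < t.+1].

Definition prehistory (S : nat -> Omega -> p.-tuple R) (A : nat -> Omega -> nat)
    (t : nat) (w : Omega) : (t.+1).-tuple (p.-tuple R) * t.-tuple nat :=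
  ([tuple S i w | i < t.+1], [tuple A i w | i < t]).

Definition markov_A0 (S : nat -> Omega -> p.-tuple R) (A : nat -> Omega -> nat)
    : Prop :=
  exists k : p.-tuple R -> nat -> set (p.-tuple R) -> R,
    forall (t : nat) (G : set (p.-tuple R)), measurable G ->
      is_condexp P (\1_(S t.+1 @^-1` G)) (history S A t)
        (fun h => k (tnth h ord_max).1 (tnth h ord_max).2 G).

Definition consistency_C1 (S : nat -> Omega -> p.-tuple R)
    (A : nat -> Omega -> nat)
    (Sstar : forall t : nat, t.-tuple nat -> Omega -> p.-tuple R) : Prop :=
  forall t w, S t w = Sstar t [tuple A i w | i < t] w.

Definition positivity_C2 (K : nat) (S : nat -> Omega -> p.-tuple R)
    (A : nat -> Omega -> nat) : Prop :=
  exists eps : R, 0 < eps /\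
    forall (t a : nat), (0 < a <= K)%N ->
      exists m : (t.+1).-tuple (p.-tuple R) * t.-tuple nat -> R,
        is_condexp P (\1_(A t @^-1` [set a])) (prehistory S A t) m /\
        {ae P, forall w, eps <= m (prehistory S A t w)}.

(* (C3): sequential ignorability: the collection of all potential states is
   conditionally independent of A^t given the pre-decision history; stated
   for every finite subfamily of potential states (which generate the
   sigma-algebra of the whole collection). *)
Definition ignorability_C3 (K : nat) (S : nat -> Omega -> p.-tuple R)
    (A : nat -> Omega -> nat)
    (Sstar : forall t : nat, t.-tuple nat -> Omega -> p.-tuple R) : Prop :=
  forall (t n : nat) (idx : n.-tuple {s : nat & s.-tuple nat}),
    (forall j : 'I_n, all (fun a => (0 < a <= K)%N) (projT2 (tnth idx j))) ->
    condindep P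
      (fun w => map_tuple (fun i => Sstar (projT1 i) (projT2 i) w) idx)
      (A t) (prehistory S A t).

End Process.

(* Both alternatives reduce to one fact: if E is independent of W given a
   discrete D, then for measurable psi, f, kappa the variable
   X1 = f(psi W, D, E) is independent of kappa W given Z = (psi W, D).
   Indeed, on {D = a} the joint law of (W, E) is the product of the two
   marginal laws, so by Fubini P(X1 in A1 | W, D) = h(psi W, D) with
   h(v, a) = P(f(v, a, E) in A1 | D = a), a function of Z alone; the law of
   kappa W given Z is provided by a Radon-Nikodym derivative.
   In case (i) take E = Y - m(S_phi, A), W = S and f(z, e) = m(z) + e, so
   that X1 = Y; in case (ii) take E = S - g(S_phi), W = (Y, S_phi) and the
   two projections for psi and kappa, so that X1 = S. *)


From HB Require Import structures.
From mathcomp Require Import all_boot all_order all_algebra.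
From mathcomp Require Import all_classical all_reals all_analysis.
From mathcomp Require Import measurable_realfun ring.

Set Implicit Arguments.
Unset Strict Implicit.
Unset Printing Implicit Defensive.
Import Order.TTheory GRing.Theory Num.Theory.
Local Open Scope classical_set_scope.
Local Open Scope ring_scope.

Lemma measurable_preimT d d' (T : measurableType d) (U : measurableType d')
    (X : T -> U) (A : set U) :
  measurable_fun setT X -> measurable A -> measurable (X @^-1` A).
Proof. by move=> mX mA; rewrite -[_ @^-1` _]setTI; exact: mX. Qed.

Lemma measurable_fun_extend d d' (T : measurableType d) (U : measurableType d')
    (D : set T) (f : T -> U) :
  measurable D -> measurable_fun D f ->
  exists g : T -> U, measurable_fun setT g /\ {in D, f =1 g}.
Proof.
move=> mD mf; exists (f \_ D); split; first exact/(measurable_restrictT _ mD).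
by move=> x xD; rewrite patchT.
Qed.

Section integral_mrestr.
Local Open Scope ereal_scope.
Context d (T : measurableType d) (R : realType).
Variables (mu : {measure set T -> \bar R}) (F : set T) (mF : measurable F).
Variables (D : set T) (mD : measurable D).
Import HBNNSimple.

Let integral_mrestr_nnsfun (h : {nnsfun T >-> R}) :
  \int[mrestr mu mF]_(x in D) (h x)%:E = \int[mu]_(x in D `&` F) (h x)%:E.
Proof.
have mDF := measurableI _ _ mD mF.
under eq_integral do rewrite fimfunE -fsumEFin//.
rewrite ge0_integral_fsum//; last 2 first.
- by move=> r; exact/measurable_EFinP/measurableT_comp.
- by move=> n x _; rewrite EFinM nnfun_muleindic_ge0.
apply/esym; under eq_integral do rewrite fimfunE -fsumEFin//.
rewrite ge0_integral_fsum//; last 2 first.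
- by move=> r; exact/measurable_EFinP/measurableT_comp.
- by move=> n x _; rewrite EFinM nnfun_muleindic_ge0.
apply: eq_fsbigr => r _; rewrite !integralZl_indic_nnsfun//.
by rewrite !integral_indic// /mrestr setIA.
Qed.

Lemma ge0_integral_mrestr (f : T -> \bar R) : measurable_fun setT f ->
    (forall x, 0 <= f x) ->
  \int[mrestr mu mF]_(x in D) f x = \int[mu]_(x in D `&` F) f x.
Proof.
move=> mf f0; pose f_ := nnsfun_approx measurableT mf.
have f_f x : (EFin \o f_ ^~ x) @ \oo --> f x.
  by apply: cvg_nnsfun_approx => // y _; exact: f0.
have mDF := measurableI _ _ mD mF.
transitivity (limn (fun n => \int[mrestr mu mF]_(x in D) (f_ n x)%:E)).
  rewrite -monotone_convergence//=.
  - by apply: eq_integral => x _; apply/esym/cvg_lim => //; exact: f_f.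
  - by move=> n; exact/measurable_EFinP/measurable_funTS.
  - by move=> n x _; rewrite lee_fin.
  - by move=> x _ a b ab; rewrite lee_fin//; exact/lefP/nd_nnsfun_approx.
transitivity (limn (fun n => \int[mu]_(x in D `&` F) (f_ n x)%:E)).
  by congr (limn _); apply/funext => n; exact: integral_mrestr_nnsfun.
rewrite -monotone_convergence//=.
- by apply: eq_integral => x _; apply/cvg_lim => //; exact: f_f.
- by move=> n; exact/measurable_EFinP/measurable_funTS.
- by move=> n x _; rewrite lee_fin.
- by move=> x _ a b ab; rewrite lee_fin//; exact/lefP/nd_nnsfun_approx.
Qed.

End integral_mrestr.

(* [mX] does not occur in the body: it is only there to let the measure
   structure of the pushforward be inferred. *)
Definition restr_law d (Omega : measurableType d) (R : realType)
    (P : probability Omega R) (F : set Omega) (mF : measurable F)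
    dT (T : measurableType dT) (X : Omega -> T) (mX : measurable_fun setT X) :
  set T -> \bar R := pushforward (mrestr P mF) X.

Section restr_law.
Local Open Scope ereal_scope.
Context d (Omega : measurableType d) (R : realType) (P : probability Omega R).
Context (F : set Omega) (mF : measurable F).
Context dT (T : measurableType dT) (X : Omega -> T) (mX : measurable_fun setT X).

Local Notation law := (restr_law P mF mX).

Let pushforward_restr : {measure set T -> \bar R} :=
  ltac:(refine (pushforward (mrestr P mF) X : {measure set T -> \bar R});
        exact: mX).

HB.instance Definition _ := Measure.copy law pushforward_restr.

Lemma restr_lawE A : law A = P (X @^-1` A `&` F). Proof. by []. Qed.

Let restr_law_fin : fin_num_fun law.
Proof.
move=> A mA; rewrite ge0_fin_numE ?measure_ge0// restr_lawE.
have mXAF := measurableI _ _ (measurable_preimT mX mA) mF.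
by rewrite (le_lt_trans (probability_le1 P mXAF))// ltry.
Qed.

HB.instance Definition _ := Measure_isFinite.Build _ _ _ law restr_law_fin.

Lemma ge0_integral_restr_law (C : set T) (f : T -> \bar R) : measurable C ->
    measurable_fun setT f -> (forall y, 0 <= f y) ->
  \int[law]_(y in C) f y = \int[P]_(x in X @^-1` C `&` F) f (X x).
Proof.
move=> mC mf f0.
rewrite /restr_law (ge0_integral_pushforward mX _ mC (measurable_funTS mf));
  last by move=> y _; exact: f0.
rewrite (@ge0_integral_mrestr _ _ _ P F mF _ (measurable_preimT mX mC) (f \o X))//.
- exact: measurableT_comp.
- by move=> x; exact: f0.
Qed.

End restr_law.

Lemma measurable_fun_pair_nat dV (V : measurableType dV) dU (U : measurableType dU)
    (g : V * nat -> U) :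
  (forall a, measurable_fun setT (fun v => g (v, a))) -> measurable_fun setT g.
Proof.
move=> mg _ Y mY; rewrite setTI.
have -> : g @^-1` Y = \bigcup_a ((fun v => g (v, a)) @^-1` Y `*` [set a]).
  apply/seteqP; split => [[v a] /= gY|[v a] [k _ [/= gY ->]]]//.
  by exists a.
by apply: bigcup_measurable => a _; apply: measurableX => //; exact: measurable_preimT.
Qed.

Section condprob_density.
Local Open Scope ereal_scope.
Context d (Omega : measurableType d) (R : realType) (P : probability Omega R).
Context dT (T : measurableType dT) (Z : Omega -> T) (mZ : measurable_fun setT Z).

(* [m] is the Radon-Nikodym derivative of the law of [Z] on [F] with respect
   to the law of [Z], so that [m \o Z] is a version of P(F | Z). *)
Lemma condprob_density (F : set Omega) : measurable F -> exists m : T -> R,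
  [/\ measurable_fun setT m, (forall z, (0 <= m z)%R),
      P.-integrable setT (EFin \o (m \o Z)) &
      forall (C : set T) (h : T -> \bar R), measurable C ->
        measurable_fun setT h -> (forall y, 0 <= h y) ->
        \int[P]_(x in Z @^-1` C `&` F) h (Z x) =
        \int[P]_(x in Z @^-1` C) ((m (Z x))%:E * h (Z x))].
Proof.
move=> mF; pose mu := restr_law P measurableT mZ; pose nu := restr_law P mF mZ.
have numu : nu `<< mu.
  move=> N hN B mB BN; have muB0 := hN B mB BN.
  apply/eqP; rewrite eq_le measure_ge0 andbT -muB0 /nu /mu !restr_lawE setIT.
  apply: le_measure; rewrite ?inE; last exact: subIsetl.
  - exact: measurableI (measurable_preimT mZ mB) mF.
  - exact: measurable_preimT.
pose f := Radon_Nikodym_SigmaFinite.f nu mu.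
have fi : mu.-integrable setT f := Radon_Nikodym_SigmaFinite.f_integrable numu.
have mf : measurable_fun setT f := measurable_int _ fi.
have f0 x : 0 <= f x := Radon_Nikodym_SigmaFinite.f_ge0 numu x.
have ffin x : f x \is a fin_num := Radon_Nikodym_SigmaFinite.f_fin_num numu x.
have mfinef : measurable_fun setT (fine \o f).
  exact: measurableT_comp (fine_measurable _) mf.
exists (fine \o f); split => //.
- by move=> z /=; rewrite fine_ge0.
- apply/integrableP; split; first exact/measurable_EFinP/measurableT_comp.
  move/integrableP : fi => [_].
  rewrite ge0_integral_restr_law//; last exact: measurableT_comp.
  rewrite preimage_setT setIT => fi.
  by under eq_integral do rewrite /= -abse_EFin fineK//.
- move=> C h mC mh h0.
  have hf0 y : 0 <= h y * f y by exact: mule_ge0.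
  have := Radon_Nikodym_SigmaFinite.change_of_variables numu h0 mC
    (measurable_funTS mh).
  rewrite !ge0_integral_restr_law//; last exact: emeasurable_funM.
  rewrite setIT => <-; apply: eq_integral => x _ /=.
  by rewrite fineK// muleC.
Qed.

End condprob_density.

Section condition_on_nat.
Local Open Scope ereal_scope.
Context d (Omega : measurableType d) (R : realType) (P : probability Omega R).
Variables (D : Omega -> nat) (mD : measurable_fun setT D).

Lemma condexp_indic_nat (a : nat) (G : set Omega) (n : nat -> R) :
    measurable G -> is_condexp P (\1_G) D n ->
  P (G `&` D @^-1` [set a]) = (n a)%:E * P (D @^-1` [set a]).
Proof.
move=> mG [_ _ _ /(_ [set a] I)].
have mDa : measurable (D @^-1` [set a]) by exact: measurable_preimT.
rewrite integral_indic// => ->; rewrite -integral_cst//.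
by apply: eq_integral => x; rewrite inE /= => ->.
Qed.

Lemma condindep_natE d1 d2 (T1 : measurableType d1) (T2 : measurableType d2)
    (X : Omega -> T1) (Y : Omega -> T2) (A : set T1) (B : set T2) (a : nat) :
    measurable_fun setT X -> measurable_fun setT Y -> condindep P X Y D ->
    measurable A -> measurable B ->
  P (X @^-1` A `&` Y @^-1` B `&` D @^-1` [set a]) * P (D @^-1` [set a]) =
  P (X @^-1` A `&` D @^-1` [set a]) * P (Y @^-1` B `&` D @^-1` [set a]).
Proof.
move=> mX mY XY_D mA mB; have [nX [nY [cX cY cXY]]] := XY_D A B mA mB.
have mXA := measurable_preimT mX mA; have mYB := measurable_preimT mY mB.
rewrite (condexp_indic_nat a (measurableI _ _ mXA mYB) cXY).
rewrite (condexp_indic_nat a mXA cX) (condexp_indic_nat a mYB cY).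
have : P (D @^-1` [set a]) \is a fin_num.
  by apply: fin_num_measure; exact: measurable_preimT.
move: (P _) => p /fineK <-.
by rewrite -!EFinM; congr EFin; ring.
Qed.

End condition_on_nat.

Section residual_independence.
Local Open Scope ereal_scope.
Context d (Omega : measurableType d) (R : realType) (P : probability Omega R).
Context dE dW dV d1 (TE : measurableType dE) (TW : measurableType dW)
  (TV : measurableType dV) (T1 : measurableType d1).
Variables (E : Omega -> TE) (W : Omega -> TW) (D : Omega -> nat)
  (psi : TW -> TV) (f : TV * nat * TE -> T1).
Hypotheses (mE : measurable_fun setT E) (mW : measurable_fun setT W)
  (mD : measurable_fun setT D) (mpsi : measurable_fun setT psi)
  (mf : measurable_fun setT f).
Hypothesis EW_D : condindep P E W D.

Local Notation level a := (D @^-1` [set a]).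
Let Z x := (psi (W x), D x).
Let X1 x := f (Z x, E x).

Let mZ : measurable_fun setT Z.
Proof. by apply: measurable_fun_pair => //; exact: measurableT_comp. Qed.

Let mX1 : measurable_fun setT X1.
Proof. by apply: measurableT_comp => //; exact: measurable_fun_pair. Qed.

Let mlevel a : measurable (level a). Proof. exact: measurable_preimT. Qed.

Lemma restr_law_pair_product (a : nat) (G : set (TW * TE)) : measurable G ->
  (fine (P (level a)))%:E * P ((fun x => (W x, E x)) @^-1` G `&` level a) =
  \int[restr_law P (mlevel a) mW]_w restr_law P (mlevel a) mE (xsection G w).
Proof.
move=> mG; have Pa_ge0 : (0 <= fine (P (level a)))%R.
  by apply: fine_ge0; exact: measure_ge0.
have mWE : measurable_fun setT (fun x => (W x, E x)) by exact: measurable_fun_pair.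
pose scaled_law := mscale (NngNum Pa_ge0) (restr_law P (mlevel a) mWE).
suff prod : (restr_law P (mlevel a) mW \x restr_law P (mlevel a) mE) G =
    scaled_law G by exact: esym prod.
apply: product_measure_unique => // B A mB mA.
change ((fine (P (level a)))%:E *
    P ((fun x => (W x, E x)) @^-1` (B `*` A) `&` level a) =
  P (W @^-1` B `&` level a) * P (E @^-1` A `&` level a)).
have -> : (fun x => (W x, E x)) @^-1` (B `*` A) = E @^-1` A `&` W @^-1` B.
  by apply/seteqP; split => x /= [].
by rewrite muleC fineK ?fin_num_measure// (condindep_natE mD a mE mW EW_D) // muleC.
Qed.

Section event.
Variables (A1 : set T1) (mA1 : measurable A1).

(* [hitprob (v, a)] is P(f (v, a, E) \in A1 | D = a) (and 0 when
   P(D = a) = 0); since E is independent of W given D, [hitprob \o Z] is a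
   version of P(X1 \in A1 | W, D). *)
Definition hit (a : nat) (v : TV) : R :=
  fine (P (E @^-1` [set e | A1 (f (v, a, e))] `&` level a)).

Definition hitprob (z : TV * nat) : R := hit z.2 z.1 / fine (P (level z.2)).

Let mhit_set a : measurable [set p : TV * TE | A1 (f (p.1, a, p.2))].
Proof.
apply: measurable_preimT mA1; apply: measurableT_comp mf _.
by apply: measurable_fun_pair => //; exact: measurable_fun_pair.
Qed.

Let mhit_event a v : measurable (E @^-1` [set e | A1 (f (v, a, e))] `&` level a).
Proof.
apply: measurableI (mlevel a); apply: measurable_preimT mE _.
by apply: measurable_preimT mA1; apply: measurableT_comp mf _; exact: measurable_fun_pair.
Qed.

Lemma measurable_hit a : measurable_fun setT (hit a).
Proof.
have -> : hit a = fine \o (restr_law P (mlevel a) mE \o xsection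
    [set p : TV * TE | A1 (f (p.1, a, p.2))]).
  by apply/funext => v; rewrite /= restr_lawE xsectionE.
exact: measurableT_comp (fine_measurable _) (measurable_fun_xsection _ (mhit_set a)).
Qed.

Lemma hit_ge0 a v : (0 <= hit a v)%R.
Proof. by apply: fine_ge0; exact: measure_ge0. Qed.

Lemma hit_le a v : (hit a v <= fine (P (level a)))%R.
Proof.
rewrite fine_le ?fin_num_measure//.
by apply: le_measure; rewrite ?inE//; exact: subIsetr.
Qed.

Lemma measurable_hitprob : measurable_fun setT hitprob.
Proof.
apply: measurable_fun_pair_nat => a; rewrite /hitprob /=.
by apply: measurable_funM; [exact: measurable_hit|exact: measurable_cst].
Qed.

Lemma hitprob_ge0 z : (0 <= hitprob z)%R.
Proof. by apply: divr_ge0; [exact: hit_ge0|apply: fine_ge0; exact: measure_ge0]. Qed.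

Lemma hitprob_le1 z : (hitprob z <= 1)%R.
Proof.
rewrite /hitprob; have [->|Pz_neq0] := eqVneq (fine (P (level z.2))) 0%R.
  by rewrite invr0 mulr0.
rewrite ler_pdivrMr ?mul1r; first exact: hit_le.
by rewrite lt0r Pz_neq0 fine_ge0// measure_ge0.
Qed.

Lemma integral_hit a (B : set TW) : measurable B ->
  (fine (P (level a)))%:E * P (X1 @^-1` A1 `&` (level a `&` W @^-1` B)) =
  \int[P]_(x in level a `&` W @^-1` B) (hit a (psi (W x)))%:E.
Proof.
move=> mB; pose G := [set p : TW * TE | A1 (f (psi p.1, a, p.2)) /\ B p.1].
have mG : measurable G.
  have -> : G = (fun p : TW * TE => f (psi p.1, a, p.2)) @^-1` A1 `&` fst @^-1` B.
    by [].
  apply: measurableI; last exact: measurable_preimT measurable_fst mB.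
  apply: measurable_preimT mA1; apply: measurableT_comp mf _.
  apply: measurable_fun_pair => //; apply: measurable_fun_pair => //.
  exact: measurableT_comp.
have -> : X1 @^-1` A1 `&` (level a `&` W @^-1` B) =
    (fun x => (W x, E x)) @^-1` G `&` level a.
  apply/seteqP; split => x /=.
  - by move=> [hA [/= Dxa hB]]; rewrite /X1 /Z Dxa in hA.
  - by move=> [[hA hB] /= Dxa]; rewrite /X1 /Z Dxa.
rewrite restr_law_pair_product//.
transitivity (\int[restr_law P (mlevel a) mW]_w
    ((hit a (psi w))%:E * (\1_B w)%:E)).
  apply: eq_integral => w _; rewrite restr_lawE xsectionE indicE.
  have [/set_mem Bw|nBw] := boolP (w \in B).
  - rewrite mule1 /hit fineK ?fin_num_measure//.
    by congr (P (_ `&` _)); apply/seteqP; split => e /=; [case|].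
  - rewrite mule0 [X in P X](_ : _ = set0) ?measure0//.
    by apply/seteqP; split => e //= [[_ Bw] _]; move/negP: nBw; apply; exact/mem_set.
rewrite ge0_integral_restr_law//; last 2 first.
- apply: emeasurable_funM; apply/measurable_EFinP; last exact: measurable_indic.
  exact: measurableT_comp (measurable_hit a) mpsi.
- by move=> w; apply: mule_ge0; rewrite lee_fin ?hit_ge0.
rewrite preimage_setT setTI integral_mkcondr epatch_indic.
by apply: eq_integral => x _; rewrite /= !indicE.
Qed.

Lemma integral_hitprob_level a (B : set TW) : measurable B ->
  \int[P]_(x in level a `&` W @^-1` B) (\1_(X1 @^-1` A1) x)%:E =
  \int[P]_(x in level a `&` W @^-1` B) (hitprob (Z x))%:E.
Proof.
move=> mB; have maB := measurableI _ _ (mlevel a) (measurable_preimT mW mB).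
rewrite integral_indic//; last exact: measurable_preimT.
have hitprobE x : (level a `&` W @^-1` B) x ->
    hitprob (Z x) = (hit a (psi (W x)) / fine (P (level a)))%R.
  by move=> [/= Dxa _]; rewrite /hitprob /Z /= Dxa.
have [Pa0|Pa_neq0] := eqVneq (fine (P (level a))) 0%R.
  transitivity (0 : \bar R).
    apply/le_anti; rewrite measure_ge0 andbT.
    have <- : P (level a) = 0 by rewrite -[P _]fineK ?Pa0// fin_num_measure.
    apply: le_measure; rewrite ?inE//; last by move=> x [_ []].
    exact: measurableI (measurable_preimT mX1 mA1) maB.
  apply/esym; rewrite integral0_eq// => x /hitprobE ->.
  by rewrite Pa0 invr0 mulr0.
transitivity (\int[P]_(x in level a `&` W @^-1` B)
    ((fine (P (level a)))^-1%:E * (hit a (psi (W x)))%:E)).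
  rewrite ge0_integralZl//; last 3 first.
  - apply: measurable_funTS; apply/measurable_EFinP.
    exact: measurableT_comp (measurable_hit a) (measurableT_comp mpsi mW).
  - by move=> x _; rewrite lee_fin hit_ge0.
  - by rewrite lee_fin invr_ge0 fine_ge0// measure_ge0.
  by rewrite -integral_hit// muleA -EFinM mulVf// mul1e.
apply: eq_integral => x; rewrite inE => /hitprobE ->.
by rewrite -EFinM mulrC.
Qed.

Lemma integral_hitprob (B : set TW) (C : set (TV * nat)) :
    measurable B -> measurable C ->
  P (X1 @^-1` A1 `&` (W @^-1` B `&` Z @^-1` C)) =
  \int[P]_(x in W @^-1` B `&` Z @^-1` C) (hitprob (Z x))%:E.
Proof.
move=> mB mC; set S := W @^-1` B `&` Z @^-1` C.
have mS : measurable S.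
  by apply: measurableI; [exact: measurable_preimT|exact: measurable_preimT].
rewrite -integral_indic//; last exact: measurable_preimT.
have -> : S = \bigcup_a (S `&` level a).
  by apply/seteqP; split => [x Sx|x [a _ []]//]; exists (D x).
have mSa a : measurable (S `&` level a) by exact: measurableI.
rewrite !ge0_integral_bigcup//; last 5 first.
- apply: measurable_funTS; apply/measurable_EFinP.
  exact: measurableT_comp measurable_hitprob mZ.
- by move=> x _; rewrite lee_fin hitprob_ge0.
- exact: trivIset_preimage1_in.
- apply: measurable_funTS; apply/measurable_EFinP.
  exact: measurable_indic (measurable_preimT mX1 mA1).
- exact: trivIset_preimage1_in.
apply: eq_eseriesr => a _.
have -> : S `&` level a = level a `&` W @^-1` (B `&` [set w | C (psi w, a)]).
  apply/seteqP; split => x /=.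
  - move=> [[hB hC] /= Dxa]; do 2!split => //.
    by move: hC; rewrite /preimage /Z /= Dxa.
  - move=> [/= Dxa [hB hC]]; do 2!split => //.
    by rewrite /preimage /Z /= Dxa.
apply: integral_hitprob_level; apply: measurableI mB _.
by apply: measurable_preimT mC; exact: measurable_fun_pair.
Qed.

End event.

Lemma condindep_residual dK (TK : measurableType dK) (kappa : TW -> TK) :
  measurable_fun setT kappa -> condindep P X1 (kappa \o W) Z.
Proof.
move=> mkappa A1 B2 mA1 mB2.
have mKB := measurable_preimT (measurableT_comp mkappa mW) mB2.
have mXA := measurable_preimT mX1 mA1.
have mZpre C : measurable C -> measurable (Z @^-1` C) by exact: measurable_preimT.
have [m [mm m_ge0 m_int mE_]] := condprob_density P mZ mKB.
have mh := measurable_hitprob mA1.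
have mhZ : measurable_fun setT (fun x => (hitprob A1 (Z x))%:E).
  exact/measurable_EFinP/measurableT_comp.
have hZ_le x : `|(hitprob A1 (Z x))%:E| <= `|1%:E|.
  by rewrite !gee0_abs ?lee_fin ?hitprob_ge0 ?hitprob_le1.
exists (hitprob A1), m; split; split => //.
- exact: integrable_indic mXA.
- apply: (le_integrable measurableT (g := EFin \o cst 1%R)) => //.
  + by move=> x _; exact: hZ_le.
  + exact: finite_measure_integrable_cst.
- move=> C mC; have mZC := mZpre C mC; rewrite integral_indic//.
  by have := integral_hitprob mA1 measurableT mC; rewrite preimage_setT setTI.
- exact: integrable_indic mKB.
- move=> C mC; have mZC := mZpre C mC; rewrite integral_indic//.
  have := mE_ C (fun=> 1) mC (measurable_cst _) (fun=> lee01).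
  rewrite integral_cst ?mul1e; last exact: measurableI mZC mKB.
  by rewrite setIC => ->; apply: eq_integral => x _; rewrite mule1.
- exact: measurable_funM.
- exact: integrable_indic (measurableI _ _ mXA mKB).
- apply: (le_integrable measurableT (g := EFin \o (m \o Z))) => //.
  + by apply/measurable_EFinP; apply: measurableT_comp => //; exact: measurable_funM.
  + move=> x _ /=; rewrite lee_fin normrM ger0_norm ?hitprob_ge0//.
    by rewrite ler_piMl ?hitprob_le1.
- move=> C mC; have mZC := mZpre C mC.
  rewrite integral_indic//; last exact: measurableI.
  have := integral_hitprob mA1 (measurable_preimT mkappa mB2) mC.
  rewrite -setIA => hitE; etransitivity; first exact: hitE.
  rewrite setIC.
  have mhE : measurable_fun setT (fun z => (hitprob A1 z)%:E).
    exact/measurable_EFinP.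
  rewrite (mE_ C _ mC mhE); last by move=> z; rewrite lee_fin hitprob_ge0.
  by apply: eq_integral => x _ /=; rewrite -EFinM mulrC.
Qed.

End residual_independence.

Definition vadd (R : realType) (n : nat) (u v : n.-tuple R) : n.-tuple R :=
  [tuple tnth u i + tnth v i | i < n].

Section tuple_measurable.
Context (R : realType) dT (T : measurableType dT) (n : nat).

Lemma vsubKC (u v : n.-tuple R) : vadd v (vsub u v) = u.
Proof.
by apply: eq_from_tnth => i; rewrite !tnth_mktuple addrC subrK.
Qed.

Lemma measurable_vsub (F G : T -> n.-tuple R) : measurable_fun setT F ->
  measurable_fun setT G -> measurable_fun setT (fun x => vsub (F x) (G x)).
Proof.
move=> mF mG; apply/measurable_fun_tnthP => i.
rewrite (_ : _ \o _ = fun x => tnth (F x) i - tnth (G x) i).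
  by apply: measurable_funB; apply: measurableT_comp (measurable_tnth i) _.
by apply/funext => x /=; rewrite tnth_mktuple.
Qed.

Lemma measurable_vadd (F G : T -> n.-tuple R) : measurable_fun setT F ->
  measurable_fun setT G -> measurable_fun setT (fun x => vadd (F x) (G x)).
Proof.
move=> mF mG; apply/measurable_fun_tnthP => i.
rewrite (_ : _ \o _ = fun x => tnth (F x) i + tnth (G x) i).
  by apply: measurable_funD; apply: measurableT_comp (measurable_tnth i) _.
by apply/funext => x /=; rewrite tnth_mktuple.
Qed.

Lemma measurable_vcondexp d (Omega : measurableType d) (P : probability Omega R)
    (X : Omega -> n.-tuple R) (Z : Omega -> T) (m : T -> n.-tuple R) :
  is_vcondexp P X Z m -> measurable_fun setT m.
Proof. by move=> Xm; apply/measurable_fun_tnthP => i; have [] := Xm i. Qed.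

End tuple_measurable.

Section condindep_residual_tuple.
Context d (Omega : measurableType d) (R : realType) (P : probability Omega R).

Lemma condindep_sym d1 d2 d3 (T1 : measurableType d1) (T2 : measurableType d2)
    (T3 : measurableType d3) (X : Omega -> T1) (Y : Omega -> T2) (Z : Omega -> T3) :
  condindep P X Y Z -> condindep P Y X Z.
Proof.
move=> XY_Z A B mA mB; have [nB [nA [cB cA cBA]]] := XY_Z B A mB mA.
exists nA, nB; split => //; rewrite setIC.
by under eq_fun do rewrite mulrC.
Qed.

Lemma eq_condindep d1 d2 d3 (T1 : measurableType d1) (T2 : measurableType d2)
    (T3 : measurableType d3) (X X' : Omega -> T1) (Y Y' : Omega -> T2)
    (Z Z' : Omega -> T3) :
  X =1 X' -> Y =1 Y' -> Z =1 Z' -> condindep P X Y Z -> condindep P X' Y' Z'.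
Proof. by move=> /funext <- /funext <- /funext <-. Qed.

Context dV (TV : measurableType dV).

Lemma condindep_response_residual dW (TW : measurableType dW) n
    (X : Omega -> n.-tuple R) (S : Omega -> TW) (V : Omega -> TV)
    (A : Omega -> nat) (psi : TW -> TV) (m : TV * nat -> n.-tuple R) :
    measurable_fun setT X -> measurable_fun setT S -> measurable_fun setT A ->
    measurable_fun setT psi -> measurable_fun setT m -> V =1 psi \o S ->
  condindep P (fun w => vsub (X w) (m (V w, A w))) S A ->
  condindep P X S (fun w => (V w, A w)).
Proof.
move=> mX mS mA mpsi mm /funext ->.
have mres : measurable_fun setT (fun w => vsub (X w) (m (psi (S w), A w))).
  apply: measurable_vsub => //; apply: measurableT_comp mm _.
  by apply: measurable_fun_pair => //; exact: measurableT_comp.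
have mf : measurable_fun setT
    (fun ze : TV * nat * n.-tuple R => vadd (m ze.1) ze.2).
  by apply: measurable_vadd => //; exact: measurableT_comp.
move=> res_ci.
have := condindep_residual mres mS mA mpsi mf res_ci (@measurable_id _ TW setT).
by apply: eq_condindep => w //=; rewrite vsubKC.
Qed.

Lemma condindep_covariate_residual n k (X : Omega -> n.-tuple R)
    (S : Omega -> k.-tuple R) (V : Omega -> TV) (A : Omega -> nat)
    (g : TV -> k.-tuple R) :
    measurable_fun setT X -> measurable_fun setT S -> measurable_fun setT V ->
    measurable_fun setT A -> measurable_fun setT g ->
  condindep P (fun w => vsub (S w) (g (V w))) (fun w => (X w, V w)) A ->
  condindep P X S (fun w => (V w, A w)).
Proof.
move=> mX mS mV mA mg res_ci.
have mres : measurable_fun setT (fun w => vsub (S w) (g (V w))).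
  exact: measurable_vsub mS (measurableT_comp mg mV).
have mf : measurable_fun setT
    (fun ze : TV * nat * k.-tuple R => vadd (g ze.1.1) ze.2).
  by apply: measurable_vadd => //; apply: measurableT_comp mg _; exact: measurableT_comp.
have := condindep_residual mres (measurable_fun_pair mX mV) mA measurable_snd mf res_ci
  measurable_fst.
by move=> /condindep_sym; apply: eq_condindep => w //=; rewrite vsubKC.
Qed.

End condindep_residual_tuple.

Unset Implicit Arguments.

Theorem lemma3p4 (R : realType) (d : measure_display) (Omega : measurableType d)
    (P : probability Omega R) (p q K : nat)
    (Sset : set (p.-tuple R))
    (S : nat -> Omega -> p.-tuple R) (A : nat -> Omega -> nat)
    (Ufun : p.-tuple R -> nat -> p.-tuple R -> R) (M : R)
    (Sstar : forall t : nat, t.-tuple nat -> Omega -> p.-tuple R)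
    (phi : p.-tuple R -> q.-tuple R)
    (mSset : measurable Sset)
    (mS : forall t, measurable_fun setT (S t))
    (SinS : forall t w, S t w \in Sset)
    (mA : forall t, measurable_fun setT (A t))
    (AinA : forall t w, (0 < A t w <= K)%N)
    (mSstar : forall t a, measurable_fun setT (Sstar t a))
    (mU : measurable_fun setT
            (fun x : (p.-tuple R * nat) * p.-tuple R => Ufun x.1.1 x.1.2 x.2))
    (Ubnd : {ae P, forall w, forall t, `|Ufun (S t w) (A t w) (S t.+1 w)| <= M})
    (Sint : forall t (i : 'I_p),
              P.-integrable setT (EFin \o (fun w => tnth (S t w) i)))
    (hA0 : markov_A0 P S A)
    (hC1 : consistency_C1 S A Sstar)
    (hC2 : positivity_C2 P K S A)
    (hC3 : ignorability_C3 P K S A Sstar)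
    (mphi : measurable_fun Sset phi)
    (t : nat) :
  let U := fun w => Ufun (S t w) (A t w) (S t.+1 w) in
  let Y := fun w => cons_tuple (U w) (S t.+1 w) in
  let Sphi := fun w => phi (S t w) in
  ((exists m : q.-tuple R * nat -> (p.+1).-tuple R,
      is_vcondexp P Y (fun w => (Sphi w, A t w)) m /\
      condindep P (fun w => vsub (Y w) (m (Sphi w, A t w))) (S t) (A t))
   \/
   (exists g : q.-tuple R -> p.-tuple R,
      is_vcondexp P (S t) Sphi g /\
      condindep P (fun w => vsub (S t w) (g (Sphi w)))
                  (fun w => (Y w, Sphi w)) (A t))) ->
  condindep P Y (S t) (fun w => (Sphi w, A t w)).
Proof.
move=> U Y Sphi.
have mU' : measurable_fun setT U.
  exact: measurableT_comp mU
    (measurable_fun_pair (measurable_fun_pair (mS t) (mA t)) (mS t.+1)).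
have mY : measurable_fun setT Y := measurable_cons mU' (mS t.+1).
have [phi' [mphi' phiE]] := measurable_fun_extend mSset mphi.
have SphiE : Sphi =1 phi' \o S t by move=> w; exact: phiE (SinS t w).
have mSphi : measurable_fun setT Sphi.
  by apply: eq_measurable_fun (measurableT_comp mphi' (mS t)) => w _; rewrite SphiE.
case=> [[m [/measurable_vcondexp mm res_ci]]|[g [/measurable_vcondexp mg res_ci]]].
- exact: condindep_response_residual mY (mS t) (mA t) mphi' mm SphiE res_ci.
- exact: condindep_covariate_residual mY (mS t) mSphi (mA t) mg res_ci.
Qed.
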